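(* Consider the system on an Erdős random graph process on $N\ge2$ nodes with noise level $\eta>0$. (i) If $0<\eta\le1$, then for every initial condition, with probability one the state eventually reaches and remains at either the all-$(+1)$ state or the all-$(-1)$ state (agreement). (ii) If $\eta>1$, then $\mathbf{E}\,S(k)=\eta^{-k}\,\mathbf{E}\,S(0)$ for all $k\ge0$; in particular $\mathbf{E}\,S(k)$ converges to zero exponentially with decay exponent $\ln\eta$.
   Context: Erdős random graph process: at each time $k$, the graph $G(k)$ on nodes $V=\{1,\dots,N\}$ is a simple undirected graph in which each of the $N(N-1)/2$ possible edges is present independently with probability $1/2$ (so each of the $2^{N(N-1)/2}$ graphs has equal probability); the graphs at different times are independent, and independent of the noises and of $x(0)$. Each node carries a value $x_i(k)\in\{+1,-1\}$. The neighborhood $N_i(k)$ consists of $i$ and all nodes adjacent to $i$ in $G(k)$; $v_i(k)=\frac{1}{|N_i(k)|}\sum_{j\in N_i(k)}x_j(k)$. The update is $x_i(k+1)=\operatorname{sign}[v_i(k)+\xi_i(k)]$, where $\xi_i(k)$ are i.i.d. uniform on $[-\eta,\eta]$ across $i$ and $k$, independent of $x(0)$ and of the graph process. The state sum is $S(k)=\sum_{i=1}^N x_i(k)$. *)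

From Stdlib Require Import Reals.
From mathcomp Require Import all_boot.
Set Implicit Arguments. Unset Strict Implicit. Unset Printing Implicit Defensive.
Open Scope R_scope.

(* A state: x_i = +1 is encoded by true, x_i = -1 by false. *)
Definition state (N : nat) := {ffun 'I_N -> bool}.
Definition spin (b : bool) : R := if b then 1 else -1.

Definition state_sum (N : nat) (x : state N) : R :=
  \big[Rplus/0]_(i : 'I_N) spin (x i).

Definition consensus (N : nat) (x : state N) : bool :=
  (x == [ffun=> true]) || (x == [ffun=> false]).

Definition graph (N : nat) := {set 'I_N * 'I_N}.
Definition simple_graph (N : nat) (G : graph N) : bool :=
  G \subset [set p : 'I_N * 'I_N | (p.1 < p.2)%N].
Definition adj (N : nat) (G : graph N) (i j : 'I_N) : bool :=
  ((i, j) \in G) || ((j, i) \in G).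
Definition nbhd (N : nat) (G : graph N) (i : 'I_N) : {set 'I_N} :=
  [set j | (j == i) || adj G i j].
Definition local_avg (N : nat) (G : graph N) (x : state N) (i : 'I_N) : R :=
  (\big[Rplus/0]_(j in nbhd G i) spin (x j)) / INR #|nbhd G i|.

(* Erdos random graph: uniform over the 2^(N(N-1)/2) simple graphs. *)
Definition graph_prob (N : nat) (G : graph N) : R :=
  if simple_graph G then / 2 ^ 'C(N, 2) else 0.

(* For xi uniform on [-eta, eta]:  P(v + xi > 0) = clip_[0,1]((v + eta)/(2 eta)). *)
Definition clip01 (r : R) : R := Rmax 0 (Rmin 1 r).
Definition prob_plus (eta v : R) : R := clip01 ((v + eta) / (2 * eta)).
Definition node_prob (eta v : R) (b : bool) : R :=
  if b then prob_plus eta v else 1 - prob_plus eta v.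

(* One-step transition probability P(x(k+1) = y | x(k) = x): average over the
   random graph, nodes updating independently given the graph. *)
Definition trans (N : nat) (eta : R) (x y : state N) : R :=
  \big[Rplus/0]_(G : graph N)
     (graph_prob G * \big[Rmult/1]_(i : 'I_N) node_prob eta (local_avg G x i) (y i)).

Definition is_distr (N : nat) (mu : state N -> R) : Prop :=
  (forall x, 0 <= mu x) /\ \big[Rplus/0]_(x : state N) mu x = 1.

Definition traj (N M : nat) := {ffun 'I_M.+1 -> state N}.
Definition traj_weight (N : nat) (eta : R) (mu : state N -> R) (M : nat)
    (p : traj N M) : R :=
  mu (p ord0) *
  \big[Rmult/1]_(j < M) trans eta (p (inord j)) (p (inord j.+1)).

Definition path_expect (N : nat) (eta : R) (mu : state N -> R) (M : nat)
    (f : traj N M -> R) : R :=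
  \big[Rplus/0]_(p : traj N M) (traj_weight eta mu p * f p).

Definition path_prob (N : nat) (eta : R) (mu : state N -> R) (M : nat)
    (E : traj N M -> bool) : R :=
  \big[Rplus/0]_(p : traj N M | E p) traj_weight eta mu p.

Definition expected_sum (N : nat) (eta : R) (mu : state N -> R) (k : nat) : R :=
  path_expect eta mu (fun p : traj N k => state_sum (p ord_max)).

(* For [eta > 1] the noise never saturates, since [|v_i| <= 1 < eta], so given the graph
   [x_i(k+1)] has mean [v_i / eta].  In [sum_i v_i] the coefficient of [x_j] is the weight
   [sum_(i in N_j) 1 / |N_i|]; on every graph these weights add up to [N], and relabelling the
   nodes preserves the uniform law of graphs, so each weight has expectation [1].  Hence
   [E[S(k+1) | x(k)] = S(k) / eta].

   For [eta <= 1] a unanimous neighbourhood saturates the noise, so consensus states are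
   absorbing.  From any state the complete graph occurs with probability [2^-C(N,2)]; there
   all nodes see the same average, so with probability at least [2^-N] they all take its
   likelier sign.  The probability of not being in consensus at time [k] is therefore at most
   [(1 - 2^-C(N,2) 2^-N)^k]. *)

From HB Require Import structures.
From Stdlib Require Import Reals Lra.
From mathcomp Require Import all_boot fingroup perm.
Set Implicit Arguments. Unset Strict Implicit. Unset Printing Implicit Defensive.
Open Scope R_scope.

Lemma RplusA : associative Rplus. Proof. by move=> x y z; rewrite Rplus_assoc. Qed.
Lemma RmultA : associative Rmult. Proof. by move=> x y z; rewrite Rmult_assoc. Qed.

HB.instance Definition _ := Monoid.isComLaw.Build R 0 Rplus RplusA Rplus_comm Rplus_0_l.
HB.instance Definition _ := Monoid.isComLaw.Build R 1 Rmult RmultA Rmult_comm Rmult_1_l.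
HB.instance Definition _ := Monoid.isMulLaw.Build R 0 Rmult Rmult_0_l Rmult_0_r.
HB.instance Definition _ :=
  Monoid.isAddLaw.Build R Rmult Rplus Rmult_plus_distr_r Rmult_plus_distr_l.

Lemma iter_Rplus n (c : R) : iter n (Rplus c) 0 = INR n * c.
Proof. by elim: n => [|n IH]; [rewrite /=; lra | rewrite iterS IH S_INR; lra]. Qed.

Lemma sumR_const (T : finType) (A : {pred T}) (c : R) :
  \big[Rplus/0]_(i in A) c = INR #|A| * c.
Proof. by rewrite big_const iter_Rplus. Qed.

Lemma sumR_const_ord n (c : R) : \big[Rplus/0]_(i < n) c = INR n * c.
Proof. by rewrite big_const_ord iter_Rplus. Qed.

Lemma ler_sumR (I : Type) (r : seq I) (P : pred I) (F G : I -> R) :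
  (forall i, P i -> F i <= G i) ->
  \big[Rplus/0]_(i <- r | P i) F i <= \big[Rplus/0]_(i <- r | P i) G i.
Proof. by move=> FG; apply: big_ind2 => // *; lra. Qed.

Lemma sumR_ge0 (I : Type) (r : seq I) (P : pred I) (F : I -> R) :
  (forall i, P i -> 0 <= F i) -> 0 <= \big[Rplus/0]_(i <- r | P i) F i.
Proof. by move=> F0; apply: big_ind => // *; lra. Qed.

Lemma prodR_ge0 (I : Type) (r : seq I) (P : pred I) (F : I -> R) :
  (forall i, P i -> 0 <= F i) -> 0 <= \big[Rmult/1]_(i <- r | P i) F i.
Proof. by move=> F0; apply: big_ind => // *; nra. Qed.

Lemma ler_term_sumR (T : finType) (F : T -> R) (i0 : T) :
  (forall i, 0 <= F i) -> F i0 <= \big[Rplus/0]_(i : T) F i.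
Proof.
move=> F0; rewrite (bigD1 i0) //=.
have := @sumR_ge0 _ (index_enum T) (fun i => i != i0) F (fun i _ => F0 i); lra.
Qed.

Lemma ler_pow_prodR n (F : 'I_n -> R) (a : R) :
  0 <= a -> (forall i, a <= F i) -> a ^ n <= \big[Rmult/1]_(i < n) F i.
Proof.
move=> a0; elim: n F => [|n IH] F aF; first by rewrite big_ord0 /=; lra.
rewrite big_ord_recr /= Rmult_comm.
apply: Rmult_le_compat; [exact: pow_le | done | exact: IH | exact: aF].
Qed.

Definition indicator (b : bool) : R := if b then 1 else 0.

Lemma indicator_ge0 b : 0 <= indicator b.
Proof. by case: b => /=; lra. Qed.

Section IndependentSpins.
Variables (N : nat) (q : 'I_N -> bool -> R).
Hypothesis q_sum1 : forall i, q i true + q i false = 1.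

Lemma sum_prod_indep :
  \big[Rplus/0]_(y : state N) \big[Rmult/1]_(i : 'I_N) q i (y i) = 1.
Proof.
rewrite /state -(bigA_distr_bigA q) big1 // => i _.
by rewrite big_bool; exact: q_sum1.
Qed.

Lemma expect_spin_indep (k : 'I_N) :
  \big[Rplus/0]_(y : state N) (\big[Rmult/1]_(i : 'I_N) q i (y i) * spin (y k))
  = q k true - q k false.
Proof.
pose qk i b := if i == k then q i b * spin b else q i b.
transitivity (\big[Rplus/0]_(y : state N) \big[Rmult/1]_(i : 'I_N) qk i (y i)).
  apply: eq_bigr => y _; rewrite (bigD1 k) //= [in RHS](bigD1 k) //= /qk eqxx.
  rewrite [X in _ = _ * X](eq_bigr (fun i => q i (y i))); last by move=> i /negbTE ->.
  by rewrite !Rmult_assoc; congr (_ * _); exact: Rmult_comm.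
rewrite /state -(bigA_distr_bigA qk) (bigD1 k) //= [X in _ * X]big1.
  by rewrite big_bool /qk eqxx /spin /=; lra.
by move=> i /negbTE ik; rewrite big_bool /qk ik; exact: q_sum1.
Qed.

End IndependentSpins.

Definition ordered_pairs N := [set p : 'I_N * 'I_N | (p.1 < p.2)%N].
Definition simple_graphs N := [set G : graph N | simple_graph G].

Lemma card_ordered_pairs N : #|ordered_pairs N| = 'C(N, 2).
Proof.
rewrite -sum1_card.
transitivity (\sum_(i : 'I_N) \sum_(j : 'I_N | (i < j)%N) 1)%N.
  by rewrite pair_big_dep /=; apply: eq_bigl => p; rewrite inE.
rewrite (exchange_big_dep xpredT) //= -[RHS]bin2_sum big_mkord.
apply: eq_bigr => j _; rewrite -[RHS]card_ord -sum1_card.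
by rewrite (@big_ord_widen_cond _ _ _ j N xpredT (fun _ => 1%N) (ltnW (ltn_ord j))).
Qed.

Lemma card_simple_graphs N : #|simple_graphs N| = (2 ^ 'C(N, 2))%N.
Proof.
have -> : simple_graphs N = powerset (ordered_pairs N) by apply/setP => G; rewrite !inE.
by rewrite card_powerset card_ordered_pairs.
Qed.

Lemma pow2_gt0 n : 0 < 2 ^ n.
Proof. by apply: pow_lt; lra. Qed.

Lemma INR_expn2 n : INR (2 ^ n)%N = 2 ^ n.
Proof. by elim: n => [|n IH] //; rewrite expnS -multE mult_INR IH. Qed.

Lemma expect_graph N (F : graph N -> R) :
  \big[Rplus/0]_(G : graph N) (graph_prob G * F G)
  = / 2 ^ 'C(N, 2) * \big[Rplus/0]_(G in simple_graphs N) F G.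
Proof.
rewrite big_distrr /= [RHS]big_mkcond /=; apply: eq_bigr => G _.
by rewrite /graph_prob inE; case: (simple_graph G) => /=; lra.
Qed.

Lemma graph_prob_ge0 N (G : graph N) : 0 <= graph_prob G.
Proof.
rewrite /graph_prob; case: ifP => _; last lra.
by apply/Rlt_le/Rinv_0_lt_compat/pow2_gt0.
Qed.

Lemma graph_prob_sum1 N : \big[Rplus/0]_(G : graph N) graph_prob G = 1.
Proof.
rewrite (eq_bigr (fun G => graph_prob G * 1)) => [|G _]; last by rewrite Rmult_1_r.
rewrite expect_graph sumR_const card_simple_graphs INR_expn2.
by have := pow2_gt0 'C(N, 2); move=> ?; field; lra.
Qed.

Lemma node_prob_ge0 eta v b : 0 <= node_prob eta v b.
Proof.
have : 0 <= clip01 ((v + eta) / (2 * eta)) <= 1.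
  split; first exact: Rmax_l.
  by apply: Rmax_lub; [lra | exact: Rmin_l].
by rewrite /node_prob /prob_plus; case: b; lra.
Qed.

Lemma node_prob_sum1 eta v : node_prob eta v true + node_prob eta v false = 1.
Proof. by rewrite /node_prob; lra. Qed.

Lemma prob_plus_unclipped eta v : 1 <= eta -> -1 <= v <= 1 ->
  prob_plus eta v = (v + eta) / (2 * eta).
Proof.
move=> eta1 v1; rewrite /prob_plus /clip01.
have p0 : 0 <= (v + eta) / (2 * eta).
  by apply: Rmult_le_pos; [lra | apply/Rlt_le/Rinv_0_lt_compat; lra].
have p1 : (v + eta) / (2 * eta) <= 1.
  by apply: (Rmult_le_reg_r (2 * eta)); [lra | rewrite /Rdiv Rmult_assoc Rinv_l; lra].
by rewrite Rmin_right // Rmax_right.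
Qed.

Definition graph_trans N eta (G : graph N) (x y : state N) : R :=
  \big[Rmult/1]_(i : 'I_N) node_prob eta (local_avg G x i) (y i).

Lemma graph_trans_term_ge0 N eta (G : graph N) (x y : state N) :
  0 <= graph_prob G * graph_trans eta G x y.
Proof.
apply: Rmult_le_pos; first exact: graph_prob_ge0.
by apply: prodR_ge0 => i _; exact: node_prob_ge0.
Qed.

Lemma trans_ge0 N eta (x y : state N) : 0 <= trans eta x y.
Proof. by apply: sumR_ge0 => G _; exact: graph_trans_term_ge0. Qed.

Lemma trans_sum1 N eta (x : state N) : \big[Rplus/0]_(y : state N) trans eta x y = 1.
Proof.
rewrite /trans exchange_big /= -[RHS](graph_prob_sum1 N); apply: eq_bigr => G _.
rewrite -big_distrr /= (@sum_prod_indep N (fun i => node_prob eta (local_avg G x i))).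
  exact: Rmult_1_r.
by move=> i; exact: node_prob_sum1.
Qed.

Lemma card_nbhd_gt0 N (G : graph N) i : 0 < INR #|nbhd G i|.
Proof. by apply/lt_0_INR/ltP/card_gt0P; exists i; rewrite inE eqxx. Qed.

Lemma local_avg_bounds N (G : graph N) x i : -1 <= local_avg G x i <= 1.
Proof.
rewrite /local_avg; have n_gt0 := card_nbhd_gt0 G i.
have ub : \big[Rplus/0]_(j in nbhd G i) spin (x j) <= \big[Rplus/0]_(j in nbhd G i) 1.
  by apply: ler_sumR => j _; rewrite /spin; case: (x j); lra.
have lb : \big[Rplus/0]_(j in nbhd G i) (-1) <= \big[Rplus/0]_(j in nbhd G i) spin (x j).
  by apply: ler_sumR => j _; rewrite /spin; case: (x j); lra.
rewrite !sumR_const in ub lb.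
by split; apply: (Rmult_le_reg_r (INR #|nbhd G i|)); rewrite // /Rdiv Rmult_assoc Rinv_l; lra.
Qed.

Lemma local_avg_const N (G : graph N) (x : state N) i b :
  (forall j, x j = b) -> local_avg G x i = spin b.
Proof.
move=> xb; rewrite /local_avg (eq_bigr (fun _ => spin b)) => [|j _]; last by rewrite xb.
by rewrite sumR_const; have := card_nbhd_gt0 G i; move=> ?; field; lra.
Qed.

Section Relabelling.
Variable N : nat.
Implicit Types (G : graph N) (s : {perm 'I_N}).

Lemma adjC G i j : adj G i j = adj G j i.
Proof. by rewrite /adj orbC. Qed.

Lemma nbhdC G i j : (j \in nbhd G i) = (i \in nbhd G j).
Proof. by rewrite !inE adjC eq_sym. Qed.

Lemma adj_simple_irr G i : simple_graph G -> adj G i i = false.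
Proof. by move=> /subsetP sG; rewrite /adj orbb; apply/negP => /sG; rewrite inE ltnn. Qed.

Lemma simple_graph_adj G G' : simple_graph G -> simple_graph G' ->
  (forall i j, adj G i j = adj G' i j) -> G = G'.
Proof.
move=> /subsetP sG /subsetP sG' GG'; apply/setP => -[i j].
case: (ltngtP i j) => [ij | ji | /val_inj ij].
- have := GG' i j; rewrite /adj.
  have [/sG|] := boolP ((j, i) \in G); first by rewrite inE /= ltnNge (ltnW ij).
  have [/sG'|] := boolP ((j, i) \in G'); first by rewrite inE /= ltnNge (ltnW ij).
  by rewrite !orbF => _ _.
- apply/idP/idP => [/sG|/sG']; by rewrite inE /= ltnNge (ltnW ji).
- by subst j; apply/idP/idP => [/sG|/sG']; rewrite inE /= ltnn.
Qed.

Definition relabel s G : graph N :=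
  [set p : 'I_N * 'I_N | (p.1 < p.2)%N && adj G (s p.1) (s p.2)].

Lemma relabel_simple s G : simple_graph (relabel s G).
Proof. by apply/subsetP => p; rewrite !inE => /andP []. Qed.

Lemma adj_relabel s G i j : adj (relabel s G) i j = (i != j) && adj G (s i) (s j).
Proof.
rewrite {1}/adj !inE /=.
case: (ltngtP i j) => [ij | ji | /val_inj ->]; last by rewrite eqxx.
- by rewrite -val_eqE (ltn_eqF ij) orbF.
- by rewrite -val_eqE eq_sym (ltn_eqF ji) adjC.
Qed.

Lemma relabelK s G : simple_graph G -> relabel s^-1 (relabel s G) = G.
Proof.
move=> sG; apply: simple_graph_adj => // [|i j]; first exact: relabel_simple.
rewrite !adj_relabel !permKV (inj_eq perm_inj).
by case: eqVneq => [->|]; rewrite ?adj_simple_irr.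
Qed.

Lemma nbhd_relabel s G i : nbhd (relabel s G) i = s @^-1: nbhd G (s i).
Proof.
apply/setP => j; rewrite !inE adj_relabel (inj_eq perm_inj).
by case: eqVneq.
Qed.

Lemma sum_simple_graphs_relabel s (F : graph N -> R) :
  \big[Rplus/0]_(G in simple_graphs N) F G
  = \big[Rplus/0]_(G in simple_graphs N) F (relabel s G).
Proof.
have relabel_onto : relabel s @: simple_graphs N = simple_graphs N.
  apply/setP => G; rewrite inE; apply/imsetP/idP => [[G' _ ->]|sG].
    exact: relabel_simple.
  by exists (relabel s^-1 G); rewrite ?inE ?relabel_simple // -{1}(invgK s) relabelK.
rewrite -{1}relabel_onto big_imset // => G1 G2; rewrite !inE => sG1 sG2 eq12.
by rewrite -(relabelK s sG1) -(relabelK s sG2) eq12.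
Qed.

Definition nbhd_weight G j : R := \big[Rplus/0]_(i in nbhd G j) / INR #|nbhd G i|.

Lemma nbhd_weight_relabel s G j : nbhd_weight (relabel s G) j = nbhd_weight G (s j).
Proof.
rewrite /nbhd_weight nbhd_relabel [RHS](reindex_inj (@perm_inj _ s)) /=.
apply: eq_big => i; first by rewrite inE.
by rewrite nbhd_relabel card_preimset //; exact: perm_inj.
Qed.

Lemma sum_local_avg G x :
  \big[Rplus/0]_(i : 'I_N) local_avg G x i
  = \big[Rplus/0]_(j : 'I_N) (spin (x j) * nbhd_weight G j).
Proof.
rewrite /local_avg.
under eq_bigr => i _ do rewrite /Rdiv big_distrl /= big_mkcond /=.
rewrite exchange_big /=; apply: eq_bigr => j _.
rewrite /nbhd_weight big_distrr /= [RHS]big_mkcond /=; apply: eq_bigr => i _.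
by rewrite nbhdC; case: (i \in nbhd G j) => /=; lra.
Qed.

Lemma sum_nbhd_weight G : \big[Rplus/0]_(j : 'I_N) nbhd_weight G j = INR N.
Proof.
rewrite /nbhd_weight; under eq_bigr => j _ do rewrite big_mkcond /=.
rewrite exchange_big /= -[INR N]Rmult_1_r -sumR_const_ord; apply: eq_bigr => i _.
rewrite -big_mkcondr /= (eq_bigl (mem (nbhd G i))) => [|j]; last by rewrite nbhdC.
by rewrite sumR_const; apply: Rinv_r; have := card_nbhd_gt0 G i; lra.
Qed.

Lemma sum_simple_graphs_nbhd_weight j :
  \big[Rplus/0]_(G in simple_graphs N) nbhd_weight G j = 2 ^ 'C(N, 2).
Proof.
have N_gt0 : 0 < INR N by apply/lt_0_INR/ltP; exact: (leq_ltn_trans (leq0n j) (ltn_ord j)).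
have same_weight k : \big[Rplus/0]_(G in simple_graphs N) nbhd_weight G k
                   = \big[Rplus/0]_(G in simple_graphs N) nbhd_weight G j.
  rewrite (sum_simple_graphs_relabel (tperm k j)); apply: eq_bigr => G _.
  by rewrite nbhd_weight_relabel tpermL.
have := sumR_const_ord N (\big[Rplus/0]_(G in simple_graphs N) nbhd_weight G j).
rewrite -(eq_bigr _ (fun k _ => same_weight k)) exchange_big /=.
rewrite (eq_bigr (fun _ => INR N)) => [|G _]; last exact: sum_nbhd_weight.
rewrite sumR_const card_simple_graphs INR_expn2 => total.
by apply: (Rmult_eq_reg_l (INR N)); lra.
Qed.

End Relabelling.

Lemma expect_sum_local_avg N (x : state N) :
  \big[Rplus/0]_(G : graph N) (graph_prob G * \big[Rplus/0]_(i : 'I_N) local_avg G x i)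
  = state_sum x.
Proof.
rewrite expect_graph; under eq_bigr => G _ do rewrite sum_local_avg.
rewrite exchange_big /= big_distrr /=; apply: eq_bigr => j _.
rewrite -big_distrr /= sum_simple_graphs_nbhd_weight.
by have := pow2_gt0 'C(N, 2); move=> ?; field; lra.
Qed.

Lemma expect_state_sum_graph_trans N eta (G : graph N) x : 1 <= eta ->
  \big[Rplus/0]_(y : state N) (graph_trans eta G x y * state_sum y)
  = (\big[Rplus/0]_(i : 'I_N) local_avg G x i) / eta.
Proof.
move=> eta1; rewrite /Rdiv big_distrl /=.
rewrite (eq_bigr (fun y => \big[Rplus/0]_(k : 'I_N) (graph_trans eta G x y * spin (y k))));
  last by move=> y _; rewrite /state_sum big_distrr.
rewrite exchange_big /=; apply: eq_bigr => k _.
rewrite (@expect_spin_indep N (fun i => node_prob eta (local_avg G x i))) => [|i].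
  rewrite /node_prob prob_plus_unclipped //; last exact: local_avg_bounds.
  by field; lra.
exact: node_prob_sum1.
Qed.

Lemma expect_state_sum_trans N eta (x : state N) : 1 <= eta ->
  \big[Rplus/0]_(y : state N) (trans eta x y * state_sum y) = state_sum x / eta.
Proof.
move=> eta1.
transitivity (\big[Rplus/0]_(G : graph N)
                (graph_prob G * ((\big[Rplus/0]_(i : 'I_N) local_avg G x i) / eta))).
  under eq_bigr => y _ do rewrite /trans big_distrl /=.
  rewrite exchange_big /=; apply: eq_bigr => G _.
  rewrite -expect_state_sum_graph_trans // big_distrr /=.
  by apply: eq_bigr => y _; rewrite /graph_trans Rmult_assoc.
rewrite -expect_sum_local_avg /Rdiv big_distrl /=.
by apply: eq_bigr => G _; rewrite Rmult_assoc.
Qed.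

Lemma consensusP N (x : state N) : reflect (exists b, forall j, x j = b) (consensus x).
Proof.
apply: (iffP orP) => [[] /eqP -> | [[] xb]].
- by exists true => j; rewrite ffunE.
- by exists false => j; rewrite ffunE.
- by left; apply/eqP/ffunP => j; rewrite ffunE xb.
- by right; apply/eqP/ffunP => j; rewrite ffunE xb.
Qed.

Lemma trans_consensus N eta (x : state N) : 0 < eta -> eta <= 1 -> consensus x ->
  trans eta x x = 1.
Proof.
move=> eta0 eta1 /consensusP [b xb].
rewrite /trans -[RHS](graph_prob_sum1 N); apply: eq_bigr => G _.
rewrite big1 ?Rmult_1_r // => i _.
rewrite (local_avg_const G i xb) xb /node_prob /prob_plus /clip01.
case: b {xb}; rewrite /spin.
- have ge1 : 1 <= (1 + eta) / (2 * eta).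
    by apply: (Rmult_le_reg_r (2 * eta)); [lra | rewrite /Rdiv Rmult_assoc Rinv_l; lra].
  by rewrite Rmin_left // Rmax_right //; lra.
- have le0 : (-1 + eta) / (2 * eta) <= 0.
    by apply: (Rmult_le_reg_r (2 * eta)); [lra | rewrite /Rdiv Rmult_assoc Rinv_l; lra].
  by rewrite Rmin_right ?Rmax_left //; lra.
Qed.

Lemma nbhd_complete N (i : 'I_N) : nbhd (ordered_pairs N) i = setT.
Proof.
apply/setP => j; rewrite !inE /adj !inE /=.
by case: (ltngtP i j) => [||/val_inj ->]; rewrite ?orbT ?eqxx.
Qed.

Definition consensus_lb N : R := / 2 ^ 'C(N, 2) * (/ 2) ^ N.

Lemma consensus_lb_bounds N : 0 < consensus_lb N <= 1.
Proof.
rewrite /consensus_lb pow_inv.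
have p1 : 1 <= 2 ^ 'C(N, 2) by apply: pow_R1_Rle; lra.
have p2 : 1 <= 2 ^ N by apply: pow_R1_Rle; lra.
rewrite -Rinv_mult; split; first by apply: Rinv_0_lt_compat; nra.
by rewrite -Rinv_1; apply: Rinv_le_contravar; nra.
Qed.

Lemma trans_to_consensus N eta (x : state N) :
  exists2 y, consensus y & consensus_lb N <= trans eta x y.
Proof.
set w := (\big[Rplus/0]_(j in [set: 'I_N]) spin (x j)) / INR #|[set: 'I_N]|.
have likely_sign b : / 2 <= node_prob eta w b -> consensus_lb N <= trans eta x [ffun=> b].
  move=> wb; rewrite /trans.
  have terms_ge0 G := graph_trans_term_ge0 eta G x [ffun=> b].
  apply: Rle_trans (ler_term_sumR (ordered_pairs N) terms_ge0).
  rewrite /graph_prob /simple_graph subxx /consensus_lb.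
  apply: Rmult_le_compat_l; first exact/Rlt_le/Rinv_0_lt_compat/pow2_gt0.
  apply: ler_pow_prodR => [|i]; first lra.
  by rewrite /local_avg nbhd_complete ffunE.
have [wT | wF] := Rle_dec (/ 2) (node_prob eta w true).
  by exists [ffun=> true]; [rewrite /consensus eqxx | exact: likely_sign].
exists [ffun=> false]; first by rewrite /consensus eqxx orbT.
by apply: likely_sign; have := node_prob_sum1 eta w; lra.
Qed.

Section Trajectories.
Variables (N : nat) (eta : R) (mu : state N -> R).

Definition traj_rcons M (q : traj N M) (y : state N) : traj N M.+1 :=
  [ffun j : 'I_M.+2 => if (j < M.+1)%N then q (inord j) else y].

Lemma traj_rcons_inord M (q : traj N M) y j :
  (j < M.+1)%N -> traj_rcons q y (inord j) = q (inord j).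
Proof. by move=> jM; rewrite ffunE inordK ?jM // (ltn_trans jM). Qed.

Lemma traj_rcons_last M (q : traj N M) y : traj_rcons q y ord_max = y.
Proof. by rewrite ffunE /= ltnn. Qed.

Lemma traj_rcons_bij M : bijective (fun qy : traj N M * state N => traj_rcons qy.1 qy.2).
Proof.
exists (fun p : traj N M.+1 => ([ffun j : 'I_M.+1 => p (inord j)], p ord_max)).
  move=> [q y] /=; rewrite traj_rcons_last; congr (_, _).
  by apply/ffunP => j; rewrite ffunE traj_rcons_inord // inord_val.
move=> p /=; apply/ffunP => j; rewrite ffunE.
case: ifPn => [jM | jM]; first by rewrite ffunE; congr (p _); apply/val_inj; rewrite /= !inordK.
congr (p _); apply/val_inj => /=.
by have := ltn_ord j; rewrite ltnS leq_eqVlt (negbTE jM) orbF => /eqP.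
Qed.

Lemma traj_weight_rcons M (q : traj N M) y :
  traj_weight eta mu (traj_rcons q y) = traj_weight eta mu q * trans eta (q ord_max) y.
Proof.
have inord_max n : (inord n : 'I_n.+1) = ord_max by apply/val_inj; rewrite /= inordK.
have first_state : traj_rcons q y ord0 = q ord0.
  by rewrite ffunE /=; congr (q _); apply/val_inj; rewrite /= inordK.
have steps : \big[Rmult/1]_(j < M)
      trans eta (traj_rcons q y (inord j)) (traj_rcons q y (inord j.+1))
    = \big[Rmult/1]_(j < M) trans eta (q (inord j)) (q (inord j.+1)).
  apply: eq_bigr => j _; have jM := ltn_ord j.
  by rewrite !traj_rcons_inord // ltnS // ltnW.
rewrite /traj_weight big_ord_recr /= first_state steps traj_rcons_inord //.
by rewrite !inord_max traj_rcons_last Rmult_assoc.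
Qed.

Lemma path_expectS M (f : traj N M.+1 -> R) :
  path_expect eta mu f
  = path_expect eta mu (fun q : traj N M =>
       \big[Rplus/0]_(y : state N) (trans eta (q ord_max) y * f (traj_rcons q y))).
Proof.
rewrite /path_expect; transitivity (\big[Rplus/0]_(q : traj N M) \big[Rplus/0]_(y : state N)
    (traj_weight eta mu (traj_rcons q y) * f (traj_rcons q y))).
  by rewrite pair_big /= (reindex _ (onW_bij _ (traj_rcons_bij M))).
apply: eq_bigr => q _; rewrite big_distrr /=; apply: eq_bigr => y _.
by rewrite traj_weight_rcons Rmult_assoc.
Qed.

Lemma path_expectZ M (c : R) (f : traj N M -> R) :
  path_expect eta mu (fun p => c * f p) = c * path_expect eta mu f.
Proof.
by rewrite /path_expect big_distrr /=; apply: eq_bigr => p _; ring.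
Qed.

Lemma path_prob_expect M (A : traj N M -> bool) :
  path_prob eta mu A = path_expect eta mu (fun p => indicator (A p)).
Proof.
rewrite /path_prob /path_expect big_mkcond /=; apply: eq_bigr => p _.
by case: (A p) => /=; lra.
Qed.

Hypothesis mu_ge0 : forall x, 0 <= mu x.
Hypothesis mu_sum1 : \big[Rplus/0]_(x : state N) mu x = 1.

Lemma traj_weight_ge0 M (p : traj N M) : 0 <= traj_weight eta mu p.
Proof.
by apply: Rmult_le_pos => //; apply: prodR_ge0 => j _; exact: trans_ge0.
Qed.

Lemma ler_path_expect M (f g : traj N M -> R) : (forall p, f p <= g p) ->
  path_expect eta mu f <= path_expect eta mu g.
Proof.
move=> fg; apply: ler_sumR => p _.
by apply: Rmult_le_compat_l; [exact: traj_weight_ge0 | exact: fg].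
Qed.

Lemma path_expect1 M : path_expect eta mu (fun _ : traj N M => 1) = 1.
Proof.
elim: M => [|M IH].
  have single_bij : bijective (fun x : state N => ([ffun=> x] : traj N 0)).
    exists (fun p : traj N 0 => p ord0) => [x|p]; first by rewrite ffunE.
    by apply/ffunP => j; rewrite ffunE (ord1 j).
  rewrite /path_expect (reindex _ (onW_bij _ single_bij)) /= -[RHS]mu_sum1.
  by apply: eq_bigr => x _; rewrite /traj_weight big_ord0 ffunE; lra.
rewrite path_expectS -[RHS]IH; apply: eq_bigr => q _; congr (_ * _).
by rewrite -[RHS](trans_sum1 eta (q ord_max)); apply: eq_bigr => y _; rewrite Rmult_1_r.
Qed.

Lemma path_expect_indicatorN M (A : traj N M -> bool) :
  path_expect eta mu (fun p => indicator (~~ A p))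
  = 1 - path_expect eta mu (fun p => indicator (A p)).
Proof.
have : path_expect eta mu (fun p => indicator (A p))
       + path_expect eta mu (fun p => indicator (~~ A p))
       = path_expect eta mu (fun _ : traj N M => 1).
  by rewrite /path_expect -big_split; apply: eq_bigr => p _ /=; case: (A p) => /=; lra.
by rewrite path_expect1; lra.
Qed.

End Trajectories.

Definition stays_in N (C : pred (state N)) K M (p : traj N M) : bool :=
  [forall j : 'I_M.+1, (K <= j)%N ==> C (p j)].

Lemma trans_le1 N eta (x y : state N) : trans eta x y <= 1.
Proof.
rewrite -(trans_sum1 eta x); apply: ler_term_sumR => z; exact: trans_ge0.
Qed.

Lemma trans_indicator_ge0 N eta (x y : state N) b : 0 <= trans eta x y * indicator b.
Proof. exact/Rmult_le_pos/indicator_ge0/trans_ge0. Qed.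

Section Absorption.
Variables (N : nat) (eta : R) (mu : state N -> R) (C : pred (state N)) (delta : R).
Hypothesis mu_ge0 : forall x, 0 <= mu x.
Hypothesis mu_sum1 : \big[Rplus/0]_(x : state N) mu x = 1.
Hypothesis C_absorbing : forall x, C x -> trans eta x x = 1.
Hypothesis C_reachable : forall x, exists2 y, C y & delta <= trans eta x y.

Lemma trans_notC_le x :
  \big[Rplus/0]_(y : state N) (trans eta x y * indicator (~~ C y))
  <= (1 - delta) * indicator (~~ C x).
Proof.
set hit := \big[Rplus/0]_(y : state N) (trans eta x y * indicator (C y)).
have -> : \big[Rplus/0]_(y : state N) (trans eta x y * indicator (~~ C y)) = 1 - hit.
  apply: (Rplus_eq_reg_l hit); rewrite Rplus_minus -(trans_sum1 eta x) -big_split /=.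
  by apply: eq_bigr => y _; case: (C y) => /=; lra.
have hit_ge y : trans eta x y * indicator (C y) <= hit.
  by apply: ler_term_sumR => z; exact: trans_indicator_ge0.
have [Cx | nCx] := boolP (C x).
  by have := hit_ge x; rewrite Cx C_absorbing //=; lra.
have [y Cy le_delta] := C_reachable x.
by have := hit_ge y; rewrite Cy /=; lra.
Qed.

Lemma prob_notC_le k :
  path_expect eta mu (fun p : traj N k => indicator (~~ C (p ord_max))) <= (1 - delta) ^ k.
Proof.
have delta_le1 : delta <= 1.
  have [y _ le_delta] := C_reachable [ffun=> true].
  exact: Rle_trans le_delta (trans_le1 _ _ _).
elim: k => [|k IH].
  rewrite pow_O -(path_expect1 eta mu_sum1 0); apply: ler_path_expect => // p.
  by case: (C _) => /=; lra.
rewrite path_expectS; apply: (@Rle_trans _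
  (path_expect eta mu (fun q : traj N k => (1 - delta) * indicator (~~ C (q ord_max))))).
  apply: ler_path_expect => // q.
  rewrite (eq_bigr (fun y => trans eta (q ord_max) y * indicator (~~ C y)));
    last by move=> y _; rewrite traj_rcons_last.
  exact: trans_notC_le.
by rewrite path_expectZ /=; apply: Rmult_le_compat_l; lra.
Qed.

Lemma prob_C_ge k :
  1 - (1 - delta) ^ k <= path_expect eta mu (fun p : traj N k => indicator (C (p ord_max))).
Proof.
have := prob_notC_le k.
by rewrite (path_expect_indicatorN eta mu_sum1 (fun p : traj N k => C (p ord_max))); lra.
Qed.

Lemma stays_in_last K (p : traj N K) : C (p ord_max) -> stays_in C K p.
Proof.
move=> Cp; apply/forallP => j; apply/implyP => Kj.
suff -> : j = ord_max by [].
by apply/val_inj/eqP; rewrite /= eqn_leq Kj -ltnS ltn_ord.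
Qed.

Lemma stays_in_rcons K M (q : traj N M) : (K <= M)%N -> stays_in C K q ->
  stays_in C K (traj_rcons q (q ord_max)).
Proof.
move=> KM stays; apply/forallP => j; apply/implyP => Kj; rewrite ffunE.
case: ifP => [jM | _].
  by have := forallP stays (inord j); rewrite inordK // Kj.
by have := forallP stays ord_max; rewrite /= KM.
Qed.

Lemma prob_stays_in_ge K M : (K <= M)%N ->
  path_expect eta mu (fun p : traj N K => indicator (C (p ord_max)))
  <= path_expect eta mu (fun p : traj N M => indicator (stays_in C K p)).
Proof.
move=> /subnK <-; elim: (M - K)%N => [|d IH].
  apply: ler_path_expect => // p.
  have [Cp | _] := boolP (C (p ord_max)); last exact: indicator_ge0.
  by rewrite (stays_in_last Cp) /=; lra.
apply: Rle_trans IH _; rewrite addSn path_expectS; apply: ler_path_expect => // q.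
have [stays | _] := boolP (stays_in C K q); last first.
  by apply: sumR_ge0 => y _; exact: trans_indicator_ge0.
have Cq : C (q ord_max) by have := forallP stays ord_max; rewrite /= leq_addl.
apply: Rle_trans (ler_term_sumR (q ord_max) (fun y => trans_indicator_ge0 _ _ _ _)).
by rewrite C_absorbing // stays_in_rcons ?leq_addl //=; lra.
Qed.

End Absorption.

Lemma expected_sumS N eta (mu : state N -> R) k : 1 <= eta ->
  expected_sum eta mu k.+1 = / eta * expected_sum eta mu k.
Proof.
move=> eta1; rewrite /expected_sum path_expectS -path_expectZ; apply: eq_bigr => q _.
rewrite (eq_bigr (fun y => trans eta (q ord_max) y * state_sum y)) => [|y _]; last first.
  by rewrite traj_rcons_last.
by rewrite expect_state_sum_trans // /Rdiv (Rmult_comm _ (/ eta)).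
Qed.

Lemma expected_sum_geometric N eta (mu : state N -> R) k : 1 <= eta ->
  expected_sum eta mu k = / eta ^ k * expected_sum eta mu 0.
Proof.
move=> eta1; elim: k => [|k IH]; first by rewrite /= Rinv_1 Rmult_1_l.
by rewrite expected_sumS // IH /= Rinv_mult Rmult_assoc.
Qed.

Unset Implicit Arguments.

Theorem proposition2 (N : nat) (eta : R) (mu : state N -> R) :
  (2 <= N)%N -> 0 < eta -> is_distr mu ->
  (eta <= 1 ->
     forall eps : R, 0 < eps ->
       exists K : nat, forall M : nat, (K <= M)%N ->
         1 - eps <= path_prob eta mu
                      (fun p : traj N M =>
                         [forall j : 'I_M.+1, (K <= j)%N ==> consensus (p j)])) /\
  (1 < eta ->
     forall k : nat,
       expected_sum eta mu k = / eta ^ k * expected_sum eta mu 0 /\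
       Rabs (expected_sum eta mu k)
         = exp (- (INR k * ln eta)) * Rabs (expected_sum eta mu 0)).
Proof.
(* The argument works for every [N]. *)
move=> _ eta0 [mu_ge0 mu_sum1]; split=> [eta1 eps eps0 | eta1 k].
- have [delta0 delta1] := consensus_lb_bounds N.
  have rate_lt1 : Rabs (1 - consensus_lb N) < 1 by rewrite Rabs_pos_eq; lra.
  have [K K_small] := pow_lt_1_zero _ rate_lt1 eps eps0.
  have absorbing x := @trans_consensus N eta x eta0 eta1.
  exists K => M KM; rewrite path_prob_expect.
  apply: (Rle_trans _ _ _ _ (prob_stays_in_ge mu_ge0 absorbing KM)).
  have := prob_C_ge mu_ge0 mu_sum1 absorbing (@trans_to_consensus N eta) K.
  have := K_small K (le_n K); have := Rle_abs ((1 - consensus_lb N) ^ K); lra.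
- have geometric := expected_sum_geometric mu k (Rlt_le _ _ eta1).
  split=> //; rewrite geometric Rabs_mult Rabs_pos_eq; last first.
    by apply/Rlt_le/Rinv_0_lt_compat/pow_lt.
  by rewrite exp_Ropp -(Rpower_pow k eta eta0) /Rpower.
Qed.
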